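(* Let $(\alpha,\beta)\in\Delta_K$ and $n\in\mathbb{Z}_{\ge0}$. Let $M_n=A_{\varepsilon_0}\cdots A_{\varepsilon_{n-1}}S=\begin{pmatrix}p''_n&p'_n&p_n\\ q''_n&q'_n&q_n\\ r''_n&r'_n&r_n\end{pmatrix}$, where $\varepsilon_k=\varepsilon(T^k(\alpha,\beta))$ (and $M_0=S$), and let $\delta_n(\alpha,\beta)$ be the set of interior points of the triangle in $\mathbb{R}^2$ with vertices $(q_n/p_n,r_n/p_n)$, $(q'_n/p'_n,r'_n/p'_n)$, $(q''_n/p''_n,r''_n/p''_n)$. Then $(\alpha,\beta)\in\delta_n(\alpha,\beta)$.
   Context: Let $K\subset\mathbb{R}$ be a real cubic number field, $N=N_{K/\mathbb{Q}}$ its norm. Fix $r=p/q$ with $p,q$ positive coprime integers and $3\nmid p$. Let $\Delta_K=\{(\alpha,\beta)\in K^2:\ 1,\alpha,\beta \text{ linearly independent over }\mathbb{Q},\ \alpha,\beta>0,\ \alpha+\beta<1\}$ and $Ind=\{(i,j): i,j\in\{0,1,2\},\ i\neq j\}$. Let $\Delta=\{(x,y)\in\mathbb{R}^2: x,y\ge 0,\ x+y\le 1\}$ and $\triangle(1,2)=\{(x,y)\in\Delta: x\ge y\}$, $\triangle(2,1)=\{x\le y\}$, $\triangle(0,1)=\{2x+y-1\le 0\}$, $\triangle(1,0)=\{2x+y-1\ge 0\}$, $\triangle(0,2)=\{x+2y-1\le0\}$, $\triangle(2,0)=\{x+2y-1\ge 0\}$ (all subsets of $\Delta$). Maps $T_{(i,j)}:\triangle(i,j)\to\Delta$: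 $T_{(1,2)}(x,y)=(\frac{x-y}{1-y},\frac{y}{1-y})$, $T_{(2,1)}(x,y)=(\frac{x}{1-x},\frac{y-x}{1-x})$, $T_{(0,1)}(x,y)=(\frac{x}{1-x},\frac{y}{1-x})$, $T_{(1,0)}(x,y)=(\frac{2x+y-1}{x+y},\frac{y}{x+y})$, $T_{(0,2)}(x,y)=(\frac{x}{1-y},\frac{y}{1-y})$, $T_{(2,0)}(x,y)=(\frac{x}{x+y},\frac{x+2y-1}{x+y})$. For $(\alpha,\beta)\in\Delta_K$ put $\gamma=1-\alpha-\beta$ and $v_{\{1,2\}}=\frac{\alpha^r\beta^r}{|N(\alpha)N(\beta)|}$, $v_{\{0,1\}}=\frac{\alpha^r\gamma^r}{|N(\alpha)N(\gamma)|}$, $v_{\{0,2\}}=\frac{\beta^r\gamma^r}{|N(\beta)N(\gamma)|}$; the maximum is attained at a unique pair $\{i_0,j_0\}$. $\varepsilon(\alpha,\beta)$ is the ordered pair $(i,j)\in Ind$ with $\{i,j\}=\{i_0,j_0\}$ and $(\alpha,\beta)\in\triangle(i,j)$, and $T(\alpha,\beta)=T_{\varepsilon(\alpha,\beta)}(\alpha,\beta)$ (a map $\Delta_K\to\Delta_K$). Matrices: $A_{(1,2)}=\begin{pmatrix}1&0&1\\0&1&1\\0&0&1\end{pmatrix}$, $A_{(2,1)}=\begin{pmatrix}1&1&0\\0&1&0\\0&1&1\end{pmatrix}$, $A_{(0,1)}=\begin{pmatrix}1&1&0\\0&1&0\\0&0&1\end{pmatrix}$, $A_{(1,0)}=\begin{pmatrix}2&-1&-1\\1&0&-1\\0&0&1\end{pmatrix}$,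 $A_{(0,2)}=\begin{pmatrix}1&0&1\\0&1&0\\0&0&1\end{pmatrix}$, $A_{(2,0)}=\begin{pmatrix}2&-1&-1\\0&1&0\\1&-1&0\end{pmatrix}$, $S=\begin{pmatrix}1&1&1\\0&1&0\\0&0&1\end{pmatrix}$. *)

From HB Require Import structures.
From mathcomp Require Import all_boot all_order all_algebra.
From mathcomp Require Import all_classical all_reals all_analysis.
Set Implicit Arguments.
Unset Strict Implicit.
Unset Printing Implicit Defensive.
Import Order.TTheory GRing.Theory Num.Theory.
Import numFieldNormedType.Exports.
Local Open Scope classical_set_scope.
Local Open Scope ring_scope.

Section Defs.
Variable R : realType.

Definition Qindep3 (b : 'I_3 -> R) : Prop :=
  forall c : 'I_3 -> rat, \sum_(i < 3) ratr (c i) * b i = 0 -> forall i, c i = 0.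

Definition Qbasis (K : set R) (b : 'I_3 -> R) : Prop :=
  Qindep3 b /\
  K = [set x | exists c : 'I_3 -> rat, x = \sum_(i < 3) ratr (c i) * b i].

Definition subfieldR (K : set R) : Prop :=
  K 1 /\ (forall x y, K x -> K y -> K (x + y)) /\ (forall x, K x -> K (- x)) /\
  (forall x y, K x -> K y -> K (x * y)) /\ (forall x, K x -> x != 0 -> K x^-1).

Definition real_cubic_field (K : set R) : Prop :=
  subfieldR K /\ exists b, Qbasis K b.

(* N is the norm N_{K/Q} on K: N x = det of the Q-linear map y |-> x y of K,
   computed in any Q-basis of K (the matrix acts on row coordinate vectors). *)
Definition is_norm (K : set R) (N : R -> R) : Prop :=
  forall b, Qbasis K b -> forall x, K x ->
  forall M : 'M[rat]_3,
    (forall i, x * b i = \sum_(j < 3) ratr (M i j) * b j) ->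
    N x = ratr (\det M).

Definition DeltaK (K : set R) (a b : R) : Prop :=
  K a /\ K b /\
  (forall c0 c1 c2 : rat, ratr c0 + ratr c1 * a + ratr c2 * b = 0 ->
     c0 = 0 /\ c1 = 0 /\ c2 = 0) /\
  0 < a /\ 0 < b /\ a + b < 1.

Inductive ind := I12 | I21 | I01 | I10 | I02 | I20.

Definition vpair (N : R -> R) (r x y : R) : R :=
  x `^ r * y `^ r / `|N x * N y|.

(* epsilon(x,y); the maximizing pair is unique, ties are broken
   arbitrarily (first {1,2}, then {0,1}). *)
Definition eps (N : R -> R) (r : R) (xy : R * R) : ind :=
  let x := xy.1 in let y := xy.2 in let g := 1 - x - y in
  let v12 := vpair N r x y in
  let v01 := vpair N r x g in
  let v02 := vpair N r y g in
  if (v01 <= v12) && (v02 <= v12) then (if y <= x then I12 else I21)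
  else if v02 <= v01 then (if 2 * x + y - 1 <= 0 then I01 else I10)
  else (if x + 2 * y - 1 <= 0 then I02 else I20).

Definition Tmap (e : ind) (xy : R * R) : R * R :=
  let x := xy.1 in let y := xy.2 in
  match e with
  | I12 => ((x - y) / (1 - y), y / (1 - y))
  | I21 => (x / (1 - x), (y - x) / (1 - x))
  | I01 => (x / (1 - x), y / (1 - x))
  | I10 => ((2 * x + y - 1) / (x + y), y / (x + y))
  | I02 => (x / (1 - y), y / (1 - y))
  | I20 => (x / (x + y), (x + 2 * y - 1) / (x + y))
  end.

Definition T (N : R -> R) (r : R) (xy : R * R) : R * R := Tmap (eps N r xy) xy.

Definition mx3 (a b c d e f g h i : R) : 'M[R]_3 :=
  \matrix_(k < 3, l < 3)
    nth 0 (nth [::] [:: [:: a; b; c]; [:: d; e; f]; [:: g; h; i]] k) l.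

Definition Amx (e : ind) : 'M[R]_3 :=
  match e with
  | I12 => mx3 1 0 1  0 1 1  0 0 1
  | I21 => mx3 1 1 0  0 1 0  0 1 1
  | I01 => mx3 1 1 0  0 1 0  0 0 1
  | I10 => mx3 2 (-1) (-1)  1 0 (-1)  0 0 1
  | I02 => mx3 1 0 1  0 1 0  0 0 1
  | I20 => mx3 2 (-1) (-1)  0 1 0  1 (-1) 0
  end.

Definition Smx : 'M[R]_3 := mx3 1 1 1  0 1 0  0 0 1.

Definition Mn (N : R -> R) (r : R) (ab : R * R) (n : nat) : 'M[R]_3 :=
  foldr (fun k acc => Amx (eps N r (iter k (T N r) ab)) *m acc) Smx (iota 0 n).

Definition vertex (M : 'M[R]_3) (j : 'I_3) : R * R :=
  (M 1 j / M 0 j, M 2%:R j / M 0 j).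

Definition triangle (M : 'M[R]_3) : set (R * R) :=
  [set z | exists l : 'I_3 -> R, (forall i, 0 <= l i) /\ \sum_(i < 3) l i = 1 /\
     z = (\sum_(i < 3) l i * (vertex M i).1, \sum_(i < 3) l i * (vertex M i).2)].

Definition delta_n (N : R -> R) (r : R) (ab : R * R) (n : nat) : set (R * R) :=
  interior (triangle (Mn N r ab n)).

End Defs.

(* Each T_(i,j) is the projective action of A_(i,j)^-1: if w = A_(i,j)^-1 (1, x, y)^T
   then T_(i,j)(x, y) = (w_1 / w_0, w_2 / w_0).  Hence, by induction on n, (1, α, β)^T is
   a combination with positive coefficients of the columns of M_n, which are the
   homogeneous vertices of δ_n and lie in the cone {q, r >= 0, q + r <= p} over Δ;
   since M_n is invertible the coefficients stay positive near (α, β), which is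
   therefore interior.  Positivity survives each step because 1, α, β are linearly
   independent over Q: this is preserved by the integral unimodular maps A^-1 and
   keeps every iterate off the sides of the subtriangles, so the weak inequalities
   defining the cone become strict.  Nothing else is used about ε. *)

From HB Require Import structures.
From mathcomp Require Import all_boot all_order all_algebra.
From mathcomp Require Import all_classical all_reals all_analysis.
From mathcomp Require Import ring lra.
Set Implicit Arguments.
Unset Strict Implicit.
Unset Printing Implicit Defensive.

Import Order.TTheory GRing.Theory Num.Theory.
Import numFieldNormedType.Exports.
Local Open Scope classical_set_scope.
Local Open Scope ring_scope.

Section Triangles.
Variable R : realType.

Lemma sum3 (F : 'I_3 -> R) : \sum_(j < 3) F j = F 0 + F 1 + F 2.
Proof. by rewrite !big_ord_recr big_ord0 /= add0r; congr (_ + _ + _); congr F; apply: val_inj. Qed.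

Lemma ord3_ind (P : 'I_3 -> Prop) : P 0 -> P 1 -> P 2 -> forall j, P j.
Proof.
move=> P0 P1 P2 [[|[|[|//]]] lt_j3].
- by rewrite (_ : Ordinal lt_j3 = 0) //; apply: val_inj.
- by rewrite (_ : Ordinal lt_j3 = 1) //; apply: val_inj.
- by rewrite (_ : Ordinal lt_j3 = 2) //; apply: val_inj.
Qed.

Definition homog (z : R * R) : 'cV[R]_3 := \col_k nth 0 [:: 1; z.1; z.2] k.

Definition dehomog (w : 'cV[R]_3) : R * R := (w 1 0 / w 0 0, w 2 0 / w 0 0).

Lemma homog_dehomog (w : 'cV[R]_3) : w 0 0 != 0 -> homog (dehomog w) = (w 0 0)^-1 *: w.
Proof.
move=> w0; apply/matrixP => i j; rewrite ord1 !mxE; move: i.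
by apply: ord3_ind; rewrite /= ?mulVf // mulrC.
Qed.

Definition Delta_cone (v : 'cV[R]_3) : Prop :=
  0 <= v 1 0 /\ 0 <= v 2 0 /\ v 1 0 + v 2 0 <= v 0 0.

Lemma Delta_cone_scale k (v : 'cV[R]_3) : 0 <= k -> Delta_cone v -> Delta_cone (k *: v).
Proof.
move=> k_ge0 [v1 [v2 v12]]; rewrite /Delta_cone !mxE -mulrDr.
by split; [|split]; [exact: mulr_ge0 | exact: mulr_ge0 | exact: ler_wpM2l].
Qed.

Lemma Delta_cone_top_gt0 (v : 'cV[R]_3) : Delta_cone v -> v != 0 -> 0 < v 0 0.
Proof.
move=> [v1 [v2 v12]] v_neq0; rewrite lt_neqAle (le_trans (addr_ge0 v1 v2)) // andbT.
apply: contra_neq v_neq0 => v0; apply/matrixP => i j; rewrite ord1 !mxE; move: i.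
apply: ord3_ind; lra.
Qed.

Lemma col_neq0_unitmx (M : 'M[R]_3) j : M \in unitmx -> col j M != 0.
Proof.
move=> uM; apply: contraTneq isT => Mj0.
have := congr1 (col j) (mulVmx uM).
rewrite colE -mulmxA -colE Mj0 mulmx0 col1 => /matrixP/(_ j 0).
by rewrite !mxE !eqxx => /eqP; rewrite eq_sym oner_eq0.
Qed.

Lemma sum_ratr_mulmx (w : 'cV[R]_3) (c : 'I_3 -> rat) :
  \sum_i ratr (c i) * w i 0 = (map_mx ratr (\row_i c i) *m w) 0 0.
Proof. by rewrite !mxE; apply: eq_bigr => i _; rewrite !mxE. Qed.

Lemma Qindep3_mulmx (B : 'M[rat]_3) (w : 'cV[R]_3) :
  B \in unitmx -> Qindep3 (w^~ 0) -> Qindep3 ((map_mx ratr B *m w)^~ 0).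
Proof.
move=> uB indep_w c; rewrite sum_ratr_mulmx mulmxA -map_mxM.
set d := \row_i c i *m B.
have -> : d = \row_i d 0 i by apply/rowP => i; rewrite mxE.
rewrite -sum_ratr_mulmx => /indep_w d0.
have /(congr1 (mulmx^~ (invmx B))) : d = 0 by apply/matrixP => i j; rewrite ord1 d0 mxE.
by rewrite mulmxK // mul0mx => /matrixP/(_ 0) c0 i; have := c0 i; rewrite !mxE.
Qed.

Lemma Qindep3_scale (k : R) (w : 'cV[R]_3) :
  k != 0 -> Qindep3 (w^~ 0) -> Qindep3 ((k *: w)^~ 0).
Proof.
move=> k_neq0 indep_w c; under eq_bigr do rewrite mxE mulrCA.
by rewrite -mulr_sumr => /eqP; rewrite mulf_eq0 (negbTE k_neq0) => /eqP/indep_w.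
Qed.

Lemma Qindep3_Delta_cone_strict (w : 'cV[R]_3) : Qindep3 (w^~ 0) -> Delta_cone w ->
  [/\ 0 < w 1 0, 0 < w 2 0 & w 1 0 + w 2 0 < w 0 0].
Proof.
move=> indep_w [w1 [w2 w12]].
have form_neq0 (c0 c1 c2 : rat) : c1 != 0 \/ c2 != 0 ->
    ratr c0 * w 0 0 + ratr c1 * w 1 0 + ratr c2 * w 2 0 != 0.
  move=> c_neq0; apply/eqP => form0.
  have /indep_w c_eq0 : \sum_(i < 3) ratr (nth 0 [:: c0; c1; c2] i) * w i 0 = 0.
    by rewrite sum3.
  by case: c_neq0 => /eqP[]; [exact: (c_eq0 1) | exact: (c_eq0 2)].
have := form_neq0 0 1 0 (or_introl (oner_neq0 _)).
have := form_neq0 0 0 1 (or_intror (oner_neq0 _)).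
have := form_neq0 (-1) 1 1 (or_introl (oner_neq0 _)).
rewrite !rmorph0 !rmorph1 rmorphN1 !mul0r !mul1r !add0r addr0 mulN1r => n012 n2 n1.
split; rewrite lt_neqAle ?w1 ?w2 ?w12 andbT 1?eq_sym //.
by apply: contra_neq n012 => ->; ring.
Qed.

Lemma affine_gt0_near (c0 c1 c2 : R) (z : R * R) : 0 < c0 + c1 * z.1 + c2 * z.2 ->
  \forall z' \near z, 0 < c0 + c1 * z'.1 + c2 * z'.2.
Proof.
move=> gt0.
have : (fun z' : R * R => c0 + c1 * z'.1 + c2 * z'.2) @ z --> c0 + c1 * z.1 + c2 * z.2.
  apply: cvgD; [apply: cvgD|].
  - exact: cvg_cst.
  - by apply: cvgM; [exact: cvg_cst | exact: cvg_fst].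
  - by apply: cvgM; [exact: cvg_cst | exact: cvg_snd].
by move=> cvg_f; exact: (cvgr_gt _ cvg_f _ gt0).
Qed.

Lemma triangle_homog (M : 'M[R]_3) (l : 'cV[R]_3) z :
  (forall j, 0 < M 0 j) -> (forall j, 0 <= l j 0) -> homog z = M *m l -> triangle M z.
Proof.
move=> M0_gt0 l_ge0 zE; exists (fun j => M 0 j * l j 0).
have rowE k : \sum_j M k j * l j 0 = nth 0 [:: 1; z.1; z.2] k.
  by have /matrixP/(_ k 0) := zE; rewrite !mxE => <-.
split; first by move=> j; rewrite mulr_ge0 // ltW.
split; first exact: (rowE 0).
case: z zE rowE => x y _ rowE; congr pair; [move: (rowE 1) | move: (rowE 2)] => /= <-.
all: apply: eq_bigr => j _; have := M0_gt0 j; rewrite lt0r => /andP[M0j_neq0 _].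
all: by rewrite /vertex /=; field.
Qed.

Lemma interior_triangle (M : 'M[R]_3) z : M \in unitmx -> (forall j, 0 < M 0 j) ->
  (forall j, 0 < (invmx M *m homog z) j 0) -> interior (triangle M) z.
Proof.
move=> uM M0_gt0 coord_gt0.
have coordE j z' : (invmx M *m homog z') j 0
    = invmx M j 0 + invmx M j 1 * z'.1 + invmx M j 2 * z'.2.
  by rewrite !mxE sum3 !mxE mulr1.
have near_coord_gt0 j : \forall z' \near z, 0 < (invmx M *m homog z') j 0.
  by near=> z'; rewrite coordE; near: z'; apply: affine_gt0_near; rewrite -coordE.
change (\forall z' \near z, triangle M z').
near=> z'; apply: (@triangle_homog M (invmx M *m homog z')) => //; last first.
  by rewrite mulKVmx.
by apply: ord3_ind; apply: ltW; near: z'; apply: near_coord_gt0.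
Unshelve. all: end_near.
Qed.

Definition subtriangle (e : ind) (z : R * R) : Prop :=
  let: (x, y) := z in
  match e with
  | I12 => y <= x | I21 => x <= y
  | I01 => 2 * x + y - 1 <= 0 | I10 => 0 <= 2 * x + y - 1
  | I02 => x + 2 * y - 1 <= 0 | I20 => 0 <= x + 2 * y - 1
  end.

Lemma eps_subtriangle N r z : subtriangle (eps N r z) z.
Proof.
case: z => x y; rewrite /eps /=.
by do 3?case: ifP => //; move/negbT; rewrite -ltNge => /ltW.
Qed.

Definition Ainv (e : ind) : 'M[rat]_3 :=
  \matrix_(i < 3, j < 3) nth 0 (nth [::]
    match e with
    | I12 => [:: [:: 1; 0; -1]; [:: 0; 1; -1]; [:: 0; 0; 1]]
    | I21 => [:: [:: 1; -1; 0]; [:: 0; 1; 0]; [:: 0; -1; 1]]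
    | I01 => [:: [:: 1; -1; 0]; [:: 0; 1; 0]; [:: 0; 0; 1]]
    | I10 => [:: [:: 0; 1; 1]; [:: -1; 2; 1]; [:: 0; 0; 1]]
    | I02 => [:: [:: 1; 0; -1]; [:: 0; 1; 0]; [:: 0; 0; 1]]
    | I20 => [:: [:: 0; 1; 1]; [:: 0; 1; 0]; [:: -1; 1; 2]]
    end i) j.

Lemma Ainv_mulmx_Amx e : map_mx ratr (Ainv e) *m Amx R e = 1%:M.
Proof.
apply/matrixP => i j; rewrite !mxE sum3 !mxE; move: i j.
by case: e; apply: ord3_ind; apply: ord3_ind;
  rewrite /= !mxE /= ?rmorph0 ?rmorph1 ?rmorphN1 ?ratr_nat; ring.
Qed.

Lemma Amx_Delta_cone e v : Delta_cone v -> Delta_cone (Amx R e *m v).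
Proof.
by case: e; rewrite /Delta_cone !mxE !sum3 /= !mxE /=; lra.
Qed.

Lemma Ainv_homog_Delta_cone e z : subtriangle e z -> Delta_cone (homog z) ->
  Delta_cone (map_mx ratr (Ainv e) *m homog z).
Proof.
case: z => x y.
by case: e; rewrite /Delta_cone !mxE !sum3 /= !mxE /= ?rmorph0 ?rmorph1 ?rmorphN1 ?ratr_nat; lra.
Qed.

Lemma Tmap_dehomog e z : Tmap e z = dehomog (map_mx ratr (Ainv e) *m homog z).
Proof.
case: z => x y.
by case: e; rewrite /dehomog !mxE !sum3 /= !mxE /= ?rmorph0 ?rmorph1 ?rmorphN1 ?ratr_nat;
  congr pair; congr (_ / _); ring.
Qed.

Definition admissible (z : R * R) : Prop :=
  Qindep3 ((homog z)^~ 0) /\ Delta_cone (homog z).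

Definition frames (M : 'M[R]_3) (z : R * R) : Prop :=
  [/\ M \in unitmx, forall j, Delta_cone (col j M) &
      exists2 c : 'cV[R]_3, (forall j, 0 < c j 0) & homog z = M *m c].

Lemma frames_mulmx (A M : 'M[R]_3) z z' k :
  A \in unitmx -> (forall v, Delta_cone v -> Delta_cone (A *m v)) ->
  0 < k -> homog z = k *: (A *m homog z') -> frames M z' -> frames (A *m M) z.
Proof.
move=> uA A_cone k_gt0 zE [uM M_cone [c c_gt0 z'E]]; split.
- by rewrite unitmx_mul uA.
- by move=> j; rewrite colE -mulmxA -colE; apply: A_cone.
- exists (k *: c); first by move=> j; rewrite mxE mulr_gt0.
  by rewrite zE z'E -scalemxAr mulmxA.
Qed.

Lemma Tmap_step e z : subtriangle e z -> admissible z ->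
  admissible (Tmap e z) /\ forall M, frames M (Tmap e z) -> frames (Amx R e *m M) z.
Proof.
move=> ez [indep_z cone_z].
set w := map_mx ratr (Ainv e) *m homog z.
have [/[!map_unitmx] uAinv uA] := mulmx1_unit (Ainv_mulmx_Amx e).
have indep_w : Qindep3 (w^~ 0) by apply: Qindep3_mulmx.
have cone_w : Delta_cone w by apply: Ainv_homog_Delta_cone.
have w0_gt0 : 0 < w 0 0.
  by have [w1_gt0 w2_gt0 w12_lt] := Qindep3_Delta_cone_strict indep_w cone_w; lra.
have TzE : homog (Tmap e z) = (w 0 0)^-1 *: w.
  by rewrite Tmap_dehomog homog_dehomog ?gt_eqF.
split.
  rewrite /admissible TzE; split; first by apply: Qindep3_scale; rewrite ?invr_eq0 ?gt_eqF.
  by apply: Delta_cone_scale; rewrite // invr_ge0 ltW.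
move=> M; apply: (frames_mulmx uA (@Amx_Delta_cone e) w0_gt0).
rewrite TzE -scalemxAr scalerA divff ?gt_eqF // scale1r /w mulmxA.
by rewrite (mulmx1C (Ainv_mulmx_Amx e)) mul1mx.
Qed.

Lemma frames_Smx z : admissible z -> frames (Smx R) z.
Proof.
case: z => x y [indep_z cone_z].
have [x_gt0 y_gt0 xy_lt1] := Qindep3_Delta_cone_strict indep_z cone_z.
rewrite !mxE /= in x_gt0 y_gt0 xy_lt1; split.
- have S_inv : Smx R *m mx3 1 (-1) (-1) 0 1 0 0 0 1 = 1%:M.
    apply/matrixP => i j; rewrite !mxE sum3 !mxE; move: i j.
    by apply: ord3_ind; apply: ord3_ind; rewrite /=; ring.
  by have [] := mulmx1_unit S_inv.
- by apply: ord3_ind; rewrite /Delta_cone /Smx !mxE /=; lra.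
- exists (\col_k nth 0 [:: 1 - x - y; x; y] k).
    by apply: ord3_ind; rewrite mxE /=; lra.
  apply/matrixP => i j; rewrite ord1 !mxE sum3 !mxE; move: i.
  by apply: ord3_ind; rewrite /=; ring.
Qed.

Lemma Mn_succ N r z n : Mn N r z n.+1 = Amx R (eps N r z) *m Mn N r (T N r z) n.
Proof.
rewrite /Mn /=; congr (_ *m _).
rewrite -[1%N]/(1 + 0)%N iotaDl foldr_map.
by elim: (iota 0 n) => //= k s ->; rewrite add0n -iterS iterSr.
Qed.

Lemma frames_Mn N r z n : admissible z -> frames (Mn N r z n) z.
Proof.
elim: n z => [|n IHn] z adm_z; first exact: frames_Smx.
have [adm_Tz step_frames] := Tmap_step (eps_subtriangle N r z) adm_z.
by rewrite Mn_succ; apply: step_frames; apply: IHn.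
Qed.

Lemma frames_interior (M : 'M[R]_3) z : frames M z -> interior (triangle M) z.
Proof.
move=> [uM M_cone [c c_gt0 zE]]; apply: interior_triangle => // [j|j].
  by have := Delta_cone_top_gt0 (M_cone j) (col_neq0_unitmx j uM); rewrite mxE.
by rewrite zE mulKmx.
Qed.

Lemma DeltaK_admissible K a b : DeltaK K a b -> admissible (a, b).
Proof.
move=> [_ [_ [indep_ab [a_gt0 [b_gt0 ab_lt1]]]]]; split.
  move=> c; rewrite sum3 !mxE /= mulr1 => /indep_ab[c0 [c1 c2]].
  by apply: ord3_ind.
by rewrite /Delta_cone !mxE /=; lra.
Qed.

End Triangles.

Theorem theorem2p5 (R : realType) (K : set R) (N : R -> R) (p q : nat)
  (hK : real_cubic_field K) (hN : is_norm K N)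
  (hp : (0 < p)%N) (hq : (0 < q)%N) (hpq : coprime p q) (h3 : ~~ (3 %| p)%N)
  (a b : R) (hab : DeltaK K a b) (n : nat) :
  delta_n N (p%:R / q%:R) (a, b) n (a, b).
Proof. by apply/frames_interior/frames_Mn; apply: DeltaK_admissible hab. Qed.
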